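(* Let $n,k\in\mathbb Z$, $\widetilde w(s,t)=w(1-s-t,t)^{-1}$ and $\breve w(s,t)=w(s,1-s-t)^{-1}$. Then: (1) if $0\le k\le n$, $\binom nk_w=\binom nk_w$; (2) if $n<0\le k$, $\binom nk_w=(-1)^k\binom{k-n-1}{k}_{\breve w}\prod_{j=1}^kW(j,-j)$; (3) if $k\le n<0$, $\binom nk_w=(-1)^{n-k}\binom{-k-1}{-n-1}_{\widetilde w}\prod_{j=1}^{n-k}W(n+1-j,j)^{-1}$; (4) if $0\le n<k$, $\binom nk_w=0$; (5) if $n<k<0$, $\binom nk_w=0$; (6) if $k<0\le n$, $\binom nk_w=0$.
   Context: $(w(s,t))_{s,t\in\mathbb Z}$ are commuting invertible variables. Product convention: $\prod_{j=l}^m A_j=A_l\cdots A_m$ if $m>l-1$, $=1$ if $m=l-1$, $=A_{l-1}^{-1}\cdots A_{m+1}^{-1}$ if $m<l-1$. For any weight family $v$, $W_v(s,t)=\prod_{j=1}^t v(s,j)$ (and $W=W_w$), and $\binom{n}{k}_v$ ($n,k\in\mathbb Z$) is the unique family with $\binom{n}{0}_v=\binom{n}{n}_v=1$ for all $n$ and $\binom{n+1}{k}_v=\binom{n}{k}_v+\binom{n}{k-1}_vW_v(k,n+1-k)$ whenever $(n+1,k)\ne(0,0)$. *)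

From HB Require Import structures.
From mathcomp Require Import all_boot all_order all_algebra.
Set Implicit Arguments. Unset Strict Implicit. Unset Printing Implicit Defensive.
Import Order.TTheory GRing.Theory Num.Theory.
Local Open Scope ring_scope.

(* Generalized product  prod_{j=l}^m A_j  over integer bounds:
   A_l ... A_m            if m > l-1,
   1                      if m = l-1,
   A_{l-1}^-1 ... A_{m+1}^-1  if m < l-1. *)
Definition iprod (R : comUnitRingType) (A : int -> R) (l m : int) : R :=
  if (l - 1 <= m)%R then \prod_(0 <= i < absz (m - l + 1)%R) A (l + i%:Z)
  else \prod_(0 <= i < absz (l - 1 - m)%R) (A (l - 1 - i%:Z))^-1.

Definition Wv (R : comUnitRingType) (v : int -> int -> R) (s t : int) : R :=
  iprod (fun j => v s j) 1 t.

Definition is_wbinom (R : comUnitRingType) (v : int -> int -> R)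
    (B : int -> int -> R) : Prop :=
  [/\ (forall n : int, B n 0 = 1),
      (forall n : int, B n n = 1) &
      (forall n k : int, (n + 1, k) <> (0, 0) ->
         B (n + 1) k = B n k + B n (k - 1) * Wv v k (n + 1 - k))].

Definition wtilde (R : comUnitRingType) (w : int -> int -> R) : int -> int -> R :=
  fun s t => (w (1 - s - t) t)^-1.
Definition wbreve (R : comUnitRingType) (w : int -> int -> R) : int -> int -> R :=
  fun s t => (w s (1 - s - t))^-1.

(* Running the recurrence from the boundary values shows that B vanishes when
   0 <= n < k or n < k < 0, and, dividing by the unit weights, when
   k < 0 <= n (cases 4-6).  The right-hand sides of cases 2 and 3 satisfy
   the same recurrence as B: for case 2 because
   W(s, -s) W_breve(s, N) = W(s, -N - s), for case 3 because multiplying the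
   product of the W(n + 1 - j, j)^-1 by W_tilde(-n - 1, _) shifts n to n + 1.
   They agree with B on k = 0 (resp. k = n) and on the row n = 0, where both
   sides vanish, so a double induction identifies them. *)

From HB Require Import structures.
From mathcomp Require Import all_boot all_order all_algebra zify ring.
Import Order.TTheory GRing.Theory Num.Theory.
Local Open Scope ring_scope.
Set Implicit Arguments. Unset Strict Implicit. Unset Printing Implicit Defensive.

Section IntervalProduct.
Variable R : comUnitRingType.
Implicit Type A : int -> R.

Lemma eq_iprod A A' l m : A =1 A' -> iprod A l m = iprod A' l m.
Proof. by move=> eqA; rewrite /iprod; case: ifP => _; apply: eq_bigr => i _; rewrite eqA. Qed.

Lemma iprod_nil A l : iprod A l (l - 1) = 1.
Proof. by rewrite /iprod lexx (_ : l - 1 - l + 1 = 0) ?big_geq //; ring. Qed.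

Lemma iprod10 A : iprod A 1 0 = 1.
Proof. by have := iprod_nil A 1; rewrite subrr. Qed.

Lemma iprod_recr A l m :
  A (m + 1) \is a GRing.unit -> iprod A l (m + 1) = iprod A l m * A (m + 1).
Proof.
move=> Au; rewrite /iprod; case: (lerP (l - 1) m) => lm.
  have [N eN] : exists N : nat, m - l + 1 = N by exists (absz (m - l + 1)); lia.
  rewrite ifT; last lia.
  rewrite eN (_ : m + 1 - l + 1 = N.+1) /=; last lia.
  by rewrite big_nat_recr //=; congr (_ * A _); lia.
have [N eN] : exists N : nat, l - 1 - m = N.+1 by exists (absz (l - 1 - m)%R).-1; lia.
rewrite eN /= big_nat_recr //= (_ : l - 1 - N%:Z = m + 1); last lia.
rewrite mulrVK //; case: N eN => [|N] eN.
  rewrite ifT; last lia.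
  by rewrite (_ : m + 1 - l + 1 = 0) ?big_geq //; lia.
rewrite ifF; last lia.
by rewrite (_ : l - 1 - (m + 1) = N.+1) //; lia.
Qed.

Lemma iprod_unit A l m :
  (forall j, A j \is a GRing.unit) -> iprod A l m \is a GRing.unit.
Proof.
move=> Au; rewrite /iprod; case: ifP => _;
  apply: (big_ind (fun x => x \is a GRing.unit)) => [|x y xu yu|i _];
  by rewrite ?unitr1 ?unitrMl ?unitrV.
Qed.

End IntervalProduct.

Section WeightProduct.
Variables (R : comUnitRingType) (v : int -> int -> R).

Lemma Wv0 s : Wv v s 0 = 1.
Proof. exact: iprod10. Qed.

Lemma Wv_recr s t :
  v s (t + 1) \is a GRing.unit -> Wv v s (t + 1) = Wv v s t * v s (t + 1).
Proof. exact: iprod_recr. Qed.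

Lemma Wv_unit s t : (forall s t, v s t \is a GRing.unit) -> Wv v s t \is a GRing.unit.
Proof. by move=> vu; apply: iprod_unit. Qed.

End WeightProduct.

Section WeightedBinomialVanishing.
Variables (R : comUnitRingType) (v B : int -> int -> R).
Hypothesis hB : is_wbinom v B.

Lemma wbinom_rec (n k : int) : n + 1 <> 0 \/ k <> 0 ->
  B (n + 1) k = B n k + B n (k - 1) * Wv v k (n + 1 - k).
Proof. by case: hB => _ _ Brec nz; apply: Brec => -[n0 k0]; case: nz. Qed.

Lemma wbinom_small (n k : int) : n < k -> 0 <= n \/ k < 0 -> B n k = 0.
Proof.
case: hB => _ Bnn _ nk.
have [d ->] : exists d : nat, k = n + 1 + d%:Z by exists (absz (k - n - 1)%R); lia.
elim: d n {nk} => [|d IHd] n nk_sign.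
  have := @wbinom_rec n (n + 1) ltac:(lia).
  rewrite (_ : n + 1 + 0%:Z = n + 1); last lia.
  rewrite (_ : n + 1 - 1 = n); last lia.
  rewrite !Bnn subrr Wv0 mulr1 => /esym/(canRL (addrK 1)).
  by rewrite subrr.
have := @wbinom_rec n (n + 1 + d.+1%:Z) ltac:(lia).
rewrite (_ : n + 1 + d.+1%:Z - 1 = n + 1 + d%:Z); last lia.
rewrite IHd ?mul0r ?addr0; last lia.
by rewrite (_ : n + 1 + d.+1%:Z = n + 1 + 1 + d%:Z) ?IHd //; lia.
Qed.

Hypothesis hv : forall s t, v s t \is a GRing.unit.

Lemma wbinom_lt0 (n k : int) : k < 0 <= n -> B n k = 0.
Proof.
case: hB => B0 _ _ /andP[k_lt0 n_ge0].
have Wreg s t : GRing.rreg (Wv v s t) by apply/mulIr/Wv_unit.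
have [j ->] : exists j : nat, k = - j%:Z - 1 by exists (absz (- k - 1)%R); lia.
elim: j n {k_lt0} n_ge0 => [|j IHj] n n_ge0.
  have := @wbinom_rec n 0 ltac:(lia).
  rewrite !B0 => /esym/(canRL (addKr 1)); rewrite addNr => /eqP.
  by rewrite mulIr_eq0 // (_ : - 0%:Z - 1 = 0 - 1) // => /eqP.
have := @wbinom_rec n (- j%:Z - 1) ltac:(lia).
rewrite !IHj ?add0r; try lia.
move=> /esym/eqP; rewrite mulIr_eq0 // => /eqP.
by rewrite (_ : - j.+1%:Z - 1 = - j%:Z - 1 - 1) //; lia.
Qed.

End WeightedBinomialVanishing.

Arguments wbinom_rec {R v B} hB n k.

Section DualWeights.
Variables (R : comUnitRingType) (w : int -> int -> R).
Hypothesis hw : forall s t, w s t \is a GRing.unit.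

Lemma wbreve_unit s t : wbreve w s t \is a GRing.unit.
Proof. by rewrite unitrV. Qed.

Lemma wtilde_unit s t : wtilde w s t \is a GRing.unit.
Proof. by rewrite unitrV. Qed.

Lemma Wv_wbreve s (N : nat) : Wv w s (- s) * Wv (wbreve w) s N = Wv w s (- N%:Z - s).
Proof.
elim: N => [|N IHN]; first by rewrite Wv0 mulr1 (_ : - 0%:Z - s = - s) //; lia.
rewrite (_ : N.+1%:Z = N%:Z + 1); last lia.
rewrite Wv_recr ?wbreve_unit // mulrA IHN /wbreve.
rewrite (_ : - N%:Z - s = (- (N%:Z + 1) - s) + 1); last lia.
by rewrite Wv_recr // (_ : 1 - s - (N%:Z + 1) = - (N%:Z + 1) - s + 1) ?mulrK //; lia.
Qed.

(* W(a + 1 - j, j) = W(a - (j - 1), j - 1) * w(a + 1 - j, j), so the factors of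
   W_tilde(-a, _) extend each W(a - j, j) by one step along the antidiagonal. *)
Lemma Wv_wtilde a (L : nat) :
  iprod (fun j => (Wv w (a - j) j)^-1) 1 L * Wv (wtilde w) (- a) (L%:Z + 1) =
  iprod (fun j => (Wv w (a + 1 - j) j)^-1) 1 (L%:Z + 1).
Proof.
have Wu s t : Wv w s t \is a GRing.unit by apply: Wv_unit.
have -> : Wv (wtilde w) (- a) (L%:Z + 1) = iprod (fun j => (w (a + 1 - j) j)^-1) 1 (L%:Z + 1).
  by apply: eq_iprod => j; rewrite /wtilde; congr (w _ _)^-1; lia.
elim: L => [|L IHL].
  by rewrite !iprod_recr ?unitrV ?hw ?Wu // !iprod10 /= Wv_recr // Wv0 !mul1r.
rewrite (_ : L.+1%:Z = L%:Z + 1); last lia.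
rewrite [iprod _ 1 (L%:Z + 1)]iprod_recr ?unitrV ?Wu //.
rewrite [in LHS]iprod_recr ?unitrV // [in RHS]iprod_recr ?unitrV ?Wu //.
rewrite -IHL (_ : a + 1 - (L%:Z + 1 + 1) = a - (L%:Z + 1)); last lia.
rewrite [Wv w _ (L%:Z + 1 + 1)]Wv_recr // invrM ?Wu //.
ring.
Qed.

End DualWeights.

Definition upper_negation (R : comUnitRingType) (w Bb : int -> int -> R) (n k : int) : R :=
  (-1) ^+ absz k * Bb (k - n - 1) k * iprod (fun j => Wv w j (- j)) 1 k.

Definition both_negation (R : comUnitRingType) (w Bt : int -> int -> R) (n k : int) : R :=
  (-1) ^+ absz (n - k) * Bt (- k - 1) (- n - 1)
    * iprod (fun j => (Wv w (n + 1 - j) j)^-1) 1 (n - k).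

Section NegativeUpperIndex.
Variables (R : comUnitRingType) (w B : int -> int -> R).
Hypothesis hw : forall s t, w s t \is a GRing.unit.
Hypothesis hB : is_wbinom w B.

Section UpperNegation.
Variable Bb : int -> int -> R.
Hypothesis hBb : is_wbinom (wbreve w) Bb.
Local Notation C := (upper_negation w Bb).

Lemma upper_negation_rec (n k : int) : 0 <= k -> n < 0 ->
  C n (k + 1) = C (n + 1) (k + 1) - C n k * Wv w (k + 1) (n - k).
Proof.
move=> k_ge0 n_lt0.
have [N eN] : exists N : nat, - n - 1 = N by exists (absz (- n - 1)%R); lia.
have := wbinom_rec hBb (k - n - 1) (k + 1) ltac:(lia).
rewrite (_ : k - n - 1 + 1 - (k + 1) = N); last lia.
rewrite (_ : k - n - 1 + 1 = k - n); last lia.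
rewrite (_ : k + 1 - 1 = k); last lia.
rewrite /upper_negation (_ : k + 1 - n - 1 = k - n); last lia.
rewrite (_ : k + 1 - (n + 1) - 1 = k - n - 1); last lia.
move=> ->; rewrite iprod_recr ?Wv_unit //.
rewrite (_ : n - k = - N%:Z - (k + 1)); last lia.
rewrite -Wv_wbreve // (_ : absz (k + 1) = (absz k).+1); last lia.
rewrite exprS; ring.
Qed.

Lemma wbinom_upper_negation (n k : int) : n < 0 <= k -> B n k = C n k.
Proof.
case/andP=> n_lt0 k_ge0.
have [K ->] : exists K : nat, k = K by exists (absz k); lia.
have [e ->] : exists e : nat, n = - e%:Z - 1 by exists (absz (- n - 1)%R); lia.
elim: K e {n_lt0 k_ge0} => [|K IHK] e.
  case: hB hBb => B0 _ _ [Bb0 _ _].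
  by rewrite B0 /upper_negation Bb0 iprod10 expr0 !mul1r.
have step (m : int) : m < 0 -> B m K = C m K ->
    B (m + 1) (K%:Z + 1) = C (m + 1) (K%:Z + 1) -> B m (K%:Z + 1) = C m (K%:Z + 1).
  move=> m_lt0 eqK eqS; rewrite upper_negation_rec // -eqK -eqS.
  rewrite (wbinom_rec hB m (K%:Z + 1) ltac:(lia)) (_ : K%:Z + 1 - 1 = K); last lia.
  by rewrite (_ : m + 1 - (K%:Z + 1) = m - K%:Z) ?addrK //; lia.
rewrite (_ : K.+1%:Z = K%:Z + 1); last lia.
elim: e => [|e IHe]; apply: step; rewrite ?IHK //; try lia.
  have Bb_small : Bb (K%:Z + 1 - (- 0%:Z - 1 + 1) - 1) (K%:Z + 1) = 0.
    by apply: (wbinom_small hBb); lia.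
  by rewrite /upper_negation Bb_small mulr0 mul0r (wbinom_small hB) //; lia.
by rewrite (_ : - e.+1%:Z - 1 + 1 = - e%:Z - 1) //; lia.
Qed.

End UpperNegation.

Section BothNegation.
Variable Bt : int -> int -> R.
Hypothesis hBt : is_wbinom (wtilde w) Bt.
Local Notation D := (both_negation w Bt).

Lemma both_negation_rec (n k : int) : k <= n -> n < 0 ->
  D n (k - 1) * Wv w k (n + 1 - k) = D (n + 1) k - D n k.
Proof.
move=> kn n_lt0.
have [d ed] : exists d : nat, n - k = d by exists (absz (n - k)%R); lia.
have := wbinom_rec hBt (- k - 1) (- n - 1) ltac:(lia).
rewrite (_ : - k - 1 + 1 - (- n - 1) = d%:Z + 1); last lia.
rewrite (_ : - n - 1 - 1 = - (n + 1) - 1); last lia.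
rewrite (_ : - k - 1 + 1 = - (k - 1) - 1); last lia.
rewrite /both_negation => ->.
rewrite (_ : n - (k - 1) = d%:Z + 1); last lia.
rewrite (_ : n + 1 - k = d%:Z + 1); last lia.
rewrite ed (_ : absz (d%:Z + 1) = d.+1); last lia.
rewrite (_ : - n - 1 = - (n + 1)); last lia.
rewrite -(Wv_wtilde hw (n + 1)) iprod_recr ?unitrV ?Wv_unit //.
rewrite (_ : n + 1 - (d%:Z + 1) = k); last lia.
rewrite -[LHS]mulrA divrK ?Wv_unit //= exprS; ring.
Qed.

Lemma wbinom_both_negation (n k : int) : k <= n < 0 -> B n k = D n k.
Proof.
case/andP=> kn n_lt0.
have [d ->] : exists d : nat, k = n - d%:Z by exists (absz (n - k)%R); lia.
have [e ->] : exists e : nat, n = - e%:Z - 1 by exists (absz (- n - 1)%R); lia.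
elim: d e {kn n_lt0} => [|d IHd] e.
  case: hB hBt => _ Bnn _ [_ Btnn _].
  by rewrite subr0 Bnn /both_negation subrr Btnn iprod10 expr0 !mul1r.
have step (m : int) : m < 0 -> B m (m - d%:Z) = D m (m - d%:Z) ->
    B (m + 1) (m - d%:Z) = D (m + 1) (m - d%:Z) -> B m (m - d.+1%:Z) = D m (m - d.+1%:Z).
  move=> m_lt0 eqB eqBS; apply: (mulIr (Wv_unit (m - d%:Z) (m + 1 - (m - d%:Z)) hw)).
  rewrite (_ : m - d.+1%:Z = m - d%:Z - 1); last lia.
  rewrite both_negation_rec //; last lia.
  by rewrite -eqB -eqBS (wbinom_rec hB m (m - d%:Z) ltac:(lia)); ring.
elim: e => [|e IHe]; apply: step; rewrite ?IHd //; try lia.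
  have Bt_lt0 : Bt (- (- 0%:Z - 1 - d%:Z) - 1) (- (- 0%:Z - 1 + 1) - 1) = 0.
    by apply: (wbinom_lt0 hBt (wtilde_unit hw)); lia.
  by rewrite /both_negation Bt_lt0 mulr0 mul0r (wbinom_lt0 hB hw) //; lia.
rewrite (_ : - e.+1%:Z - 1 + 1 = - e%:Z - 1); last lia.
by rewrite (_ : - e.+1%:Z - 1 - d%:Z = - e%:Z - 1 - d.+1%:Z) //; lia.
Qed.

End BothNegation.
End NegativeUpperIndex.

Theorem proposition1 (R : comUnitRingType) (w : int -> int -> R)
  (hw : forall s t : int, w s t \is a GRing.unit)
  (B Bt Bb : int -> int -> R)
  (hB : is_wbinom w B) (hBt : is_wbinom (wtilde w) Bt)
  (hBb : is_wbinom (wbreve w) Bb) (n k : int) :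
    (0 <= k <= n -> B n k = B n k) /\
      (n < 0 <= k -> B n k = (-1) ^+ absz k * Bb (k - n - 1) k
                              * iprod (fun j => Wv w j (- j)) 1 k) /\
      (k <= n < 0 -> B n k = (-1) ^+ absz (n - k)%R * Bt (- k - 1) (- n - 1)
                              * iprod (fun j => (Wv w (n + 1 - j) j)^-1) 1 (n - k)) /\
      (0 <= n < k -> B n k = 0) /\
      (n < k < 0 -> B n k = 0) /\
      (k < 0 <= n -> B n k = 0).
Proof.
split=> //; split; first exact: (wbinom_upper_negation hw hB hBb).
split; first exact: (wbinom_both_negation hw hB hBt).
split; first by case/andP=> n_ge0 nk; apply: (wbinom_small hB) => //; left.
split; first by case/andP=> nk k_lt0; apply: (wbinom_small hB) => //; right.
exact: (wbinom_lt0 hB hw).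
Qed.
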